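(* For every set $S\subseteq\mathbb{R}$ of nonnegative reals, the category $\overrightarrow{\mathbf{U}}_S$ has the Ramsey property. Consequently, the category $\overrightarrow{\mathbf{U}}$ of all finite convexly ordered ultrametric spaces with embeddings has the Ramsey property.
   Context: A convexly ordered ultrametric space is a structure $(U,d,<)$ where $d:U^2\to\mathbb{R}$ is an ultrametric (a metric with $d(x,z)\le\max\{d(x,y),d(y,z)\}$) and $<$ is a linear order on $U$ such that every closed ball $B(u,r)=\{y: d(u,y)\le r\}$ is convex with respect to $<$ (if $x,y\in B(u,r)$ and $x<z<y$ then $z\in B(u,r)$). Embeddings are injections $f$ with $d(f(x),f(y))=d(x,y)$ and $x<y\iff f(x)<f(y)$. The spectre of a space is $\mathrm{spec}(\mathcal{U})=\{d(x,y):x,y\in U\}$. $\overrightarrow{\mathbf{U}}$ is the category of finite convexly ordered ultrametric spaces with embeddings, and $\overrightarrow{\mathbf{U}}_S$ is its full subcategory of those $\mathcal{U}$ with $\mathrm{spec}(\mathcal{U})\subseteq S$. A category $\mathbf{C}$ has the Ramsey property if for every integer $k\ge2$ and all objects $\mathcal{A},\mathcal{B}$ with $\hom(\mathcal{A},\mathcal{B})\ne\varnothing$ there is an object $\mathcal{C}$ such that for every partition $\hom(\mathcal{A},\mathcal{C})=\Sigma_1\cup\dots\cup\Sigma_k$ into pairwise disjoint sets there are $i$ and $w\in\hom(\mathcal{B},\mathcal{C})$ with $w\cdot\hom(\mathcal{A},\mathcal{B})\subseteq\Sigma_i$. *)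

From mathcomp Require Import all_boot.
From Stdlib Require Import Reals.

Set Implicit Arguments.
Unset Strict Implicit.
Unset Printing Implicit Defensive.

Record COUS := MkCOUS {
  cu_car :> finType;
  cu_d : cu_car -> cu_car -> R;
  cu_lt : cu_car -> cu_car -> Prop;
  cu_d_nonneg : forall x y, (0 <= cu_d x y)%R;
  cu_d_eq0 : forall x y, cu_d x y = 0%R <-> x = y;
  cu_d_sym : forall x y, cu_d x y = cu_d y x;
  cu_d_tri : forall x y z, (cu_d x z <= cu_d x y + cu_d y z)%R;
  cu_d_ultra : forall x y z, (cu_d x z <= Rmax (cu_d x y) (cu_d y z))%R;
  cu_lt_irrefl : forall x, ~ cu_lt x x;
  cu_lt_trans : forall x y z, cu_lt x y -> cu_lt y z -> cu_lt x z;
  cu_lt_total : forall x y, x <> y -> cu_lt x y \/ cu_lt y x;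
  cu_convex : forall (u : cu_car) (r : R) (x y z : cu_car),
      (cu_d u x <= r)%R -> (cu_d u y <= r)%R ->
      cu_lt x z -> cu_lt z y -> (cu_d u z <= r)%R
}.

Definition is_emb (A B : COUS) (f : A -> B) : Prop :=
  injective f /\
  (forall x y : A, cu_d (f x) (f y) = cu_d x y) /\
  (forall x y : A, cu_lt x y <-> cu_lt (f x) (f y)).

Definition spec_in (S : R -> Prop) (A : COUS) : Prop :=
  forall x y : A, S (cu_d x y).

(* Ramsey property of the full subcategory of objects satisfying P.
   A partition of hom(A,C) into k pairwise disjoint classes is given by a
   colouring chi into 'I_k (defined on all finite functions A -> C; only its
   values on embeddings matter). *)
Definition ramsey_property (P : COUS -> Prop) : Prop :=
  forall (k : nat), (2 <= k)%N ->
  forall A B : COUS, P A -> P B ->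
  (exists f : {ffun A -> B}, is_emb f) ->
  exists C : COUS, P C /\
    forall chi : {ffun A -> C} -> 'I_k,
    exists (i : 'I_k) (w : {ffun B -> C}),
      is_emb w /\
      forall u : {ffun A -> B}, is_emb u -> chi [ffun x => w (u x)] = i.

(* A finite convexly ordered ultrametric space B is described by its tree of
   balls, and listing the balls in depth-first order makes them a finite chain.
   Index the n distances of B by levels.  The words of length n over 'I_N,
   at distance "the distance of B indexed by the highest level where they
   differ" and ordered lexicographically from the top letter, form again such a
   space, and composing the position of balls in the chain with any strictly
   increasing map into N embeds B into it: the letter of level l of a point is
   the image of its ball of level l.  A colouring of the embeddings of A into
   the word space is thus a colouring of the strictly increasing maps from the
   ball chain of A into N, and the finite Ramsey theorem for increasing maps
   between chains (by induction on the chain, splitting off its least element)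
   produces the increasing map for which every embedding A -> B -> words gets
   the same colour.  All distances of the word space are distances of B. *)

From mathcomp Require Import all_boot zify.
From Stdlib Require Import Reals Lra ClassicalEpsilon.

Set Implicit Arguments.
Unset Strict Implicit.
Unset Printing Implicit Defensive.

Section ChainRamsey.
Variables (T : finType) (prec : rel T).
Hypotheses (prec_irr : irreflexive prec) (prec_trans : transitive prec).
Implicit Types D : {set T}.

Definition total_on (D : {set T}) :=
  forall x y, x \in D -> y \in D -> x != y -> prec x y || prec y x.

Definition mono_on (D : {set T}) (Z : T -> nat) (M : nat) :=
  {in D &, forall x y, prec x y -> Z x < Z y} /\ {in D, forall x, Z x < M}.

Definition incr_below (f : nat -> nat) (M N : nat) :=
  (forall i j, i < j -> j < M -> f i < f j) /\ (forall i, i < M -> f i < N).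

Definition depends_on (D : {set T}) (chi : (T -> nat) -> nat) :=
  forall Z Z', {in D, forall x, Z x = Z' x} -> chi Z = chi Z'.

Definition rank (D : {set T}) x := #|[set y in D | prec y x]|.

Lemma rank_lt D x y : x \in D -> prec x y -> rank D x < rank D y.
Proof.
move=> xD lt_xy; apply: proper_card; apply/properP; split.
  apply/subsetP=> z; rewrite !inE => /andP[-> lt_zx] /=.
  exact: prec_trans lt_zx lt_xy.
by exists x; rewrite !inE ?xD ?lt_xy ?prec_irr.
Qed.

Lemma rank_bound D x : x \in D -> rank D x < #|D|.
Proof.
move=> xD; apply: proper_card; apply/properP; split.
  by apply/subsetP=> y; rewrite inE => /andP[].
by exists x; rewrite // inE prec_irr andbF.
Qed.

Lemma rank_ltE D : total_on D ->
  {in D &, forall x y, (rank D x < rank D y) = prec x y}.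
Proof.
move=> tot x y xD yD; apply/idP/idP; last exact: rank_lt.
have [->|ne] := eqVneq x y; first by rewrite ltnn.
case/orP: (tot x y xD yD ne) => // lt_yx lt_xy.
by have := ltn_trans lt_xy (rank_lt yD lt_yx); rewrite ltnn.
Qed.

Lemma rank_inj D : total_on D -> {in D &, injective (rank D)}.
Proof.
move=> tot x y xD yD e; apply/eqP; apply: contraT => ne.
by case/orP: (tot x y xD yD ne); rewrite -(rank_ltE tot) // e ltnn.
Qed.

Lemma exists_least D : D != set0 -> total_on D ->
  exists2 x0, x0 \in D & forall y, y \in D -> y != x0 -> prec x0 y.
Proof.
case/set0Pn=> x1 x1D tot.
have [x0 x0D x0_min] := arg_minnP (rank D) x1D.
exists x0 => // y yD ne; rewrite -(rank_ltE tot) // ltn_neqAle x0_min // andbT.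
by apply: contra ne => /eqP /(rank_inj tot) -> //.
Qed.

Lemma total_on_sub D D' : D' \subset D -> total_on D -> total_on D'.
Proof. by move=> /subsetP sub tot x y xD yD; apply: tot; apply: sub. Qed.

Lemma incr_below_comp f g M N P :
  incr_below f M N -> incr_below g N P -> incr_below (g \o f) M P.
Proof.
move=> [f_lt f_bd] [g_lt g_bd]; split=> [i j lt_ij lt_jM|i lt_iM] /=.
  by apply: g_lt; [apply: f_lt|apply: f_bd].
by apply: g_bd; apply: f_bd.
Qed.

Lemma incr_below_shift f M N : incr_below f M N ->
  incr_below (fun i => if i is j.+1 then (f j).+1 else 0) M.+1 N.+1.
Proof.
move=> [f_lt f_bd]; split=> [[|i] [|j]|[|i]] //=; rewrite !ltnS.
- by move=> lt_ij lt_jM; apply: f_lt.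
- exact: f_bd.
Qed.

Lemma incr_below_ltE f M N i j : incr_below f M N -> i < M -> j < M ->
  (f i < f j) = (i < j).
Proof.
move=> [f_lt _] iM jM; apply/idP/idP; last by move/f_lt; apply.
case: (ltngtP i j) => // [lt_ji|->]; last by rewrite ltnn.
by have := f_lt _ _ lt_ji iM; lia.
Qed.

Lemma incr_below_inj f M N i j : incr_below f M N -> i < M -> j < M ->
  f i = f j -> i = j.
Proof.
move=> [f_lt _] iM jM e; case: (ltngtP i j) => // [lt_ij|lt_ji].
  by have := f_lt _ _ lt_ij jM; rewrite e ltnn.
by have := f_lt _ _ lt_ji iM; rewrite e ltnn.
Qed.

Lemma incr_mono_on D f Z M N :
  incr_below f M N -> mono_on D Z M -> mono_on D (f \o Z) N.
Proof.
move=> [f_lt f_bd] [Z_lt Z_bd]; split=> [x y xD yD lt_xy|x xD] /=.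
  by apply: f_lt; [apply: Z_lt|apply: Z_bd].
by apply: f_bd; apply: Z_bd.
Qed.

Lemma pigeonhole_count M k (col : nat -> nat) (s : seq nat) :
  all (fun i => col i < k.+1) s -> k.+1 * M <= size s ->
  exists c, M <= count (fun i => col i == c) s.
Proof.
elim: k s => [|k IH] s s_col s_size.
  exists 0; rewrite (@eq_in_count _ _ predT) ?count_predT; first by rewrite mul1n in s_size.
  by move=> i /(allP s_col); rewrite ltnS leqn0.
case: (leqP M (count (fun i => col i == k.+1) s)) => [|lt_cM]; first by exists k.+1.
pose s' := [seq i <- s | col i != k.+1].
have s'_col : all (fun i => col i < k.+1) s'.
  apply/allP=> i; rewrite mem_filter => /andP[ne /(allP s_col)].
  by rewrite ltnS leq_eqVlt (negbTE ne).
have s'_size : k.+1 * M <= size s'.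
  have := count_predC (fun i => col i == k.+1) s; rewrite size_filter.
  move: s_size lt_cM; set a := count _ s; set b := count _ s; lia.
have [c le_Mc] := IH _ s'_col s'_size.
exists c; apply: leq_trans le_Mc _; rewrite count_filter.
by apply: sub_count => i /andP[].
Qed.

Lemma pigeonhole_incr M k (col : nat -> nat) :
  (forall i, i < k * M -> col i < k) -> 0 < k ->
  exists c sigma, incr_below sigma M (k * M) /\
    forall i, i < M -> col (sigma i) = c.
Proof.
case: k => [//|k] col_lt _.
have s_col : all (fun i => col i < k.+1) (iota 0 (k.+1 * M)).
  by apply/allP=> i; rewrite mem_iota => /andP[_ /col_lt].
have [c le_Mc] := pigeonhole_count s_col (eq_leq (esym (size_iota _ _))).
set s := [seq i <- iota 0 (k.+1 * M) | col i == c].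
have s_size : M <= size s by rewrite size_filter.
have s_mem j : j < M -> nth 0 s j \in s by move=> jM; apply: mem_nth; apply: leq_trans s_size.
have s_sorted : sorted ltn s by apply/sorted_filter/iota_ltn_sorted/ltn_trans.
exists c, (nth 0 s); split; [split|].
- move=> i j lt_ij jM.
  by rewrite (sorted_ltn_nth ltn_trans 0 s_sorted) ?inE //; apply: leq_trans s_size; lia.
- by move=> i /s_mem; rewrite mem_filter mem_iota => /andP[_ /andP[_]].
- by move=> i /s_mem; rewrite mem_filter => /andP[/eqP].
Qed.

Definition ramsey_chain (D : {set T}) :=
  forall M k, exists N, forall chi, depends_on D chi -> (forall Z, chi Z < k) ->
    exists2 phi, incr_below phi M N &
      exists c, forall Z, mono_on D Z M -> chi (phi \o Z) = c.

Section LeastElement.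
Variables (D : {set T}) (x0 : T).
Hypotheses (x0D : x0 \in D) (x0_least : forall y, y \in D -> y != x0 -> prec x0 y).
Hypothesis ramsey_rest : ramsey_chain (D :\ x0).

Lemma mono_on_least_lt Z L y : mono_on D Z L -> y \in D -> y != x0 -> Z x0 < Z y.
Proof. by move=> [Z_lt _] yD ne; apply: Z_lt => //; apply: x0_least. Qed.

Lemma mono_on_least Z L y : mono_on D Z L -> y \in D -> Z x0 <= Z y.
Proof.
move=> monoZ yD; have [->//|ne] := eqVneq y x0.
exact: ltnW (mono_on_least_lt monoZ yD ne).
Qed.

Lemma mono_on_pred Z L : mono_on D Z L.+1 -> 0 < Z x0 -> mono_on D (predn \o Z) L.
Proof.
move=> monoZ Z0; have [Z_lt Z_bd] := monoZ.
split=> [x y xD yD lt_xy|x xD] /=.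
  by have := Z_lt _ _ xD yD lt_xy; have := mono_on_least monoZ xD; lia.
by have := Z_bd _ xD; have := mono_on_least monoZ xD; lia.
Qed.

Lemma mono_on_rest Z L : mono_on D Z L.+1 -> Z x0 = 0 ->
  mono_on (D :\ x0) (predn \o Z) L.
Proof.
move=> monoZ Z0; have [Z_lt Z_bd] := monoZ.
have Z_pos x : x \in D :\ x0 -> 0 < Z x.
  by rewrite !inE => /andP[ne xD]; rewrite -Z0 (mono_on_least_lt monoZ).
split=> [x y xD' yD' lt_xy|x xD'] /=; have /setD1P[_ xD] := xD'.
  have /setD1P[_ yD] := yD'.
  by have := Z_lt _ _ xD yD lt_xy; have := Z_pos _ xD'; lia.
by have := Z_bd _ xD; have := Z_pos _ xD'; lia.
Qed.

Definition least_homogeneous k L N :=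
  forall chi, depends_on D chi -> (forall Z, chi Z < k) ->
  exists2 psi, incr_below psi L N & forall Z Z', mono_on D Z L -> mono_on D Z' L ->
    Z x0 = Z' x0 -> chi (psi \o Z) = chi (psi \o Z').

Lemma least_homogeneous_succ k L N :
  least_homogeneous k L N -> exists N', least_homogeneous k L.+1 N'.
Proof.
move=> homN; have [N1 homN1] := ramsey_rest N k.
exists N1.+1 => chi dep_chi chi_lt.
pose chi1 Y := chi (fun x => if x == x0 then 0 else (Y x).+1).
have dep1 : depends_on (D :\ x0) chi1.
  move=> Y Y' eqY; apply: dep_chi => x xD; case: eqVneq => // ne.
  by rewrite eqY // !inE ne.
have [phi1 phi1_incr [c1 hc1]] := homN1 chi1 dep1 (fun Y => chi_lt _).
pose chi2 Z := chi (fun x => (phi1 (Z x)).+1).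
have dep2 : depends_on D chi2 by move=> Z Z' eqZ; apply: dep_chi => x xD; rewrite eqZ.
have [psi' psi'_incr hom] := homN chi2 dep2 (fun Z => chi_lt _).
(* [psi] reserves the value 0 for [x0]: maps with [Z x0 = 0] are made
   homogeneous by [phi1] on [D :\ x0], the others by [psi'] through [chi2]. *)
pose psi i := if i is j.+1 then (phi1 (psi' j)).+1 else 0.
exists psi; first exact: incr_below_shift (incr_below_comp psi'_incr phi1_incr).
have at_zero Z : mono_on D Z L.+1 -> Z x0 = 0 -> chi (psi \o Z) = c1.
  move=> monoZ Z0; rewrite -(hc1 (psi' \o (predn \o Z))).
    apply: dep_chi => x xD /=; case: eqVneq => [->|ne]; first by rewrite Z0.
    by have := mono_on_least_lt monoZ xD ne; rewrite Z0; case: (Z x).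
  exact: incr_mono_on psi'_incr (mono_on_rest monoZ Z0).
have at_pos Z : mono_on D Z L.+1 -> 0 < Z x0 ->
    chi (psi \o Z) = chi2 (psi' \o (predn \o Z)).
  move=> monoZ Z0; apply: dep_chi => x xD /=.
  by have := leq_trans Z0 (mono_on_least monoZ xD); case: (Z x).
move=> Z Z' monoZ monoZ' e; have [Z0|Z0] := posnP (Z x0).
  by rewrite (at_zero Z) // (at_zero Z') // -e.
rewrite (at_pos Z) // (at_pos Z') -?e //.
by apply: hom; rewrite /= ?e //; apply: mono_on_pred; rewrite -?e.
Qed.

Lemma least_homogeneous_exists k L : exists N, least_homogeneous k L N.
Proof.
elim: L => [|L [N homN]]; last exact: least_homogeneous_succ homN.
exists 0 => chi _ _; exists (fun i => i); first by [].
by move=> Z Z' [_ /(_ _ x0D)].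
Qed.

End LeastElement.

Theorem chain_ramsey D : total_on D -> ramsey_chain D.
Proof.
move Dq : #|D| => q; elim: q D Dq => [|q IHq] D Dq tot M k.
  exists M => chi dep_chi _; exists (fun i => i); first by [].
  exists (chi (fun _ => 0)) => Z _; apply: dep_chi => x.
  by move/eqP: Dq; rewrite cards_eq0 => /eqP ->; rewrite inE.
have [x0 x0D x0_least] : exists2 x0, x0 \in D & forall y, y \in D -> y != x0 -> prec x0 y.
  by apply: exists_least tot; rewrite -card_gt0 Dq.
have ramsey_rest : ramsey_chain (D :\ x0).
  apply: IHq; first by move: Dq; rewrite (cardsD1 x0) x0D => -[].
  exact: total_on_sub (subsetDl _ _) tot.
have [N homN] := least_homogeneous_exists x0D x0_least ramsey_rest k (k * M).
exists N => chi dep_chi chi_lt.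
have k_gt0 : 0 < k by have := chi_lt (fun _ => 0); lia.
have [psi psi_incr hom] := homN chi dep_chi chi_lt.
(* The colour of [psi \o Z] is a function of [Z x0] alone; pigeonhole on it. *)
have [col hcol] : exists col : nat -> nat, forall i, col i < k /\
    forall Z, mono_on D Z (k * M) -> Z x0 = i -> chi (psi \o Z) = col i.
  apply: (ClassicalEpsilon.choice (fun i c => c < k /\
    forall Z, mono_on D Z (k * M) -> Z x0 = i -> chi (psi \o Z) = c)) => i.
  have [[Z0 [monoZ0 Z0x0]]|none] := classic (exists Z0, mono_on D Z0 (k * M) /\ Z0 x0 = i).
    by exists (chi (psi \o Z0)); split=> // Z monoZ Zx0; apply: hom; rewrite ?Zx0.
  by exists 0; split=> // Z monoZ Zx0; case: none; exists Z.
have [c [sigma [sigma_incr sigma_col]]] := @pigeonhole_incr M k col (fun i _ => (hcol i).1) k_gt0.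
exists (psi \o sigma); first exact: incr_below_comp sigma_incr psi_incr.
exists c => Z monoZ; have [_ Z_bd] := monoZ.
rewrite -(sigma_col (Z x0) (Z_bd _ x0D)); apply: (hcol _).2 => //.
exact: incr_mono_on sigma_incr monoZ.
Qed.

End ChainRamsey.

Section WordSpace.
Variables (n N : nat) (delta : nat -> R).
Hypotheses (delta0 : delta 0 = 0%R)
  (delta_mono : forall i j, i <= j -> (delta i <= delta j)%R)
  (delta_pos : forall j, 0 < j -> (0 < delta j)%R).

Definition word := {ffun 'I_n -> 'I_N}.
Implicit Types p q r : word.

Definition split_level p q := \max_(l | p l != q l) (nat_of_ord l).+1.

Definition word_lt p q : Prop :=
  exists l : 'I_n, p l < q l /\ forall l' : 'I_n, l < l' -> p l' = q l'.

Definition word_dist p q := delta (split_level p q).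

Lemma split_level_leP p q m :
  split_level p q <= m <-> forall l : 'I_n, m <= l -> p l = q l.
Proof.
split=> [/bigmax_leqP le_m l le_ml|eq_m].
  by apply/eqP; apply: contraTT le_ml => /le_m; rewrite -ltnNge.
by apply/bigmax_leqP => l; apply: contraNT; rewrite -leqNgt => /eq_m ->.
Qed.

Lemma split_level_le p q : split_level p q <= n.
Proof. by apply/split_level_leP => l; have := ltn_ord l; lia. Qed.

Lemma split_level_eq0 p q : split_level p q = 0 <-> p = q.
Proof.
split=> [e|->]; last by apply/eqP; rewrite -leqn0; apply/split_level_leP.
by apply/ffunP => l; apply: (split_level_leP p q 0).1; rewrite ?e.
Qed.

Lemma split_levelC p q : split_level p q = split_level q p.
Proof. by apply: eq_bigl => l; rewrite eq_sym. Qed.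

Lemma split_level_ultra p q r :
  split_level p r <= maxn (split_level p q) (split_level q r).
Proof.
apply/split_level_leP => l le_ml.
rewrite ((split_level_leP p q _).1 (leqnn _)) ?((split_level_leP q r _).1 (leqnn _)) //; lia.
Qed.

Lemma split_level_eq p q L : L <= n ->
  (forall l : 'I_n, p l = q l <-> L <= l) -> split_level p q = L.
Proof.
move=> le_Ln eq_pq; apply/eqP; rewrite eqn_leq; apply/andP; split.
  by apply/split_level_leP => l /eq_pq.
case: L le_Ln eq_pq => [//|L] lt_Ln eq_pq.
have ne : p (Ordinal lt_Ln) != q (Ordinal lt_Ln) by apply/eqP => /eq_pq /=; lia.
exact: (@leq_bigmax_cond _ (fun l => p l != q l) (fun l : 'I_n => (nat_of_ord l).+1) _ ne).
Qed.

Lemma split_level_top p q : 0 < split_level p q ->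
  exists l : 'I_n, (nat_of_ord l).+1 = split_level p q /\ p l != q l.
Proof.
move=> lvl_gt0; case: (pickP (fun l => p l != q l)) => [l0 ne0|none].
  exists [arg max_(i > l0 | p i != q i) (nat_of_ord i).+1].
  rewrite /split_level
    (@bigmax_eq_arg _ l0 (fun i => p i != q i) (fun i : 'I_n => (nat_of_ord i).+1) ne0).
  by split=> //; case: arg_maxnP.
move: lvl_gt0; rewrite lt0n => /eqP; case; apply/split_level_eq0/ffunP => l.
by apply/eqP; rewrite -[_ == _]negbK none.
Qed.

Lemma word_lt_irrefl p : ~ word_lt p p.
Proof. by case=> l []; rewrite ltnn. Qed.

Lemma word_lt_trans p q r : word_lt p q -> word_lt q r -> word_lt p r.
Proof.
case=> l1 [lt1 eq1] [l2 [lt2 eq2]].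
case: (ltngtP l1 l2) => [lt_l|lt_l|/val_inj e].
- by exists l2; split; [rewrite eq1|move=> l' lt_l'; rewrite eq1 ?eq2 //; lia].
- by exists l1; split; [rewrite -eq2|move=> l' lt_l'; rewrite eq1 ?eq2 //; lia].
- subst l2; exists l1; split; first exact: ltn_trans lt2.
  by move=> l' lt_l'; rewrite eq1 ?eq2.
Qed.

Lemma word_lt_total p q : p <> q -> word_lt p q \/ word_lt q p.
Proof.
move=> ne; have lvl_gt0 : 0 < split_level p q by rewrite lt0n; apply/eqP => /split_level_eq0.
have [l [lvl_l ne_l]] := split_level_top lvl_gt0.
have eq_above (l' : 'I_n) : l < l' -> p l' = q l'.
  by move=> lt_l'; apply: (split_level_leP p q _).1 (leqnn _); lia.
case: (ltngtP (p l) (q l)) => [lt_pq|lt_qp|/val_inj e]; first by left; exists l.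
  by right; exists l; split=> // l' /eq_above.
by rewrite e eqxx in ne_l.
Qed.

Lemma word_ltE p q L (Q : Prop) : L <= n -> (Q -> 0 < L) ->
  (forall l : 'I_n, p l = q l <-> L <= l) ->
  (forall l : 'I_n, p l < q l <-> l < L /\ Q) -> word_lt p q <-> Q.
Proof.
move=> le_Ln Q_pos eq_pq lt_pq; split; first by case=> l [/lt_pq[]].
move=> hQ; case: L le_Ln Q_pos eq_pq lt_pq => [_ /(_ hQ)//|L] lt_Ln _ eq_pq lt_pq.
exists (Ordinal lt_Ln); split; first exact/lt_pq.
by move=> l' /= lt_l'; apply/eq_pq.
Qed.

Lemma word_lt_top p q (l0 : 'I_n) : word_lt p q ->
  (forall l : 'I_n, l0 < l -> p l = q l) -> p l0 != q l0 -> p l0 < q l0.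
Proof.
move=> [l [lt_l eq_above]] eq0 ne0; case: (ltngtP l l0) => [lt_ll0|lt_l0l|/val_inj <- //].
  by rewrite eq_above ?eqxx in ne0.
by rewrite eq0 ?ltnn in lt_l.
Qed.

Lemma split_level_convex u x y z : word_lt x z -> word_lt z y ->
  split_level u z <= maxn (split_level u x) (split_level u y).
Proof.
move=> lt_xz lt_zy; set m := maxn _ _.
have ux (l : 'I_n) : m <= l -> u l = x l by apply: (split_level_leP u x _).1; lia.
have uy (l : 'I_n) : m <= l -> u l = y l by apply: (split_level_leP u y _).1; lia.
apply/split_level_leP => l le_ml; apply/eqP; apply: contraT => ne.
have Pl : (m <= l) && (u l != z l) by rewrite le_ml ne.
have [lm /andP[le_mlm ne_lm] lm_max] :=
  @arg_maxnP _ l (fun i : 'I_n => (m <= i) && (u i != z i)) (fun i : 'I_n => nat_of_ord i) Pl.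
have above (l' : 'I_n) : lm < l' -> u l' = z l'.
  move=> lt_l'; apply/eqP; apply: contraT => ne'.
  by have := lm_max l'; rewrite ne' andbT (leq_trans le_mlm (ltnW lt_l')) => /(_ isT); lia.
(* [x < z] and [z < y] are both decided at [lm], where [x] and [y] agree with [u]. *)
have xz_above (l' : 'I_n) : lm < l' -> x l' = z l'.
  by move=> lt_l'; rewrite -ux ?above //; lia.
have zy_above (l' : 'I_n) : lm < l' -> z l' = y l'.
  by move=> lt_l'; rewrite -uy -?above //; lia.
have := word_lt_top lt_xz xz_above; rewrite -ux // => /(_ ne_lm).
have := word_lt_top lt_zy zy_above; rewrite -uy // eq_sym => /(_ ne_lm).
lia.
Qed.

Lemma delta_ge0 j : (0 <= delta j)%R.
Proof. by rewrite -delta0; apply: delta_mono. Qed.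

Lemma delta_maxn i j : (delta (maxn i j) <= Rmax (delta i) (delta j))%R.
Proof. by case: (leqP i j) => _; [apply: Rmax_r|apply: Rmax_l]. Qed.

Lemma word_dist_eq0 p q : word_dist p q = 0%R <-> p = q.
Proof.
split=> [e|->]; last by rewrite /word_dist (split_level_eq0 q q).2.
apply/split_level_eq0/eqP; apply: contraT; rewrite -lt0n => /delta_pos.
by rewrite -/(word_dist p q) e => /Rlt_irrefl.
Qed.

Lemma word_dist_ultra p q r : (word_dist p r <= Rmax (word_dist p q) (word_dist q r))%R.
Proof. exact: Rle_trans (delta_mono (split_level_ultra p q r)) (delta_maxn _ _). Qed.

Lemma word_dist_tri p q r : (word_dist p r <= word_dist p q + word_dist q r)%R.
Proof.
apply: Rle_trans (word_dist_ultra p q r) _.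
have := delta_ge0 (split_level p q); have := delta_ge0 (split_level q r).
rewrite /word_dist => ? ?; apply: Rmax_lub; lra.
Qed.

Lemma word_dist_convex u (r : R) x y z : (word_dist u x <= r)%R -> (word_dist u y <= r)%R ->
  word_lt x z -> word_lt z y -> (word_dist u z <= r)%R.
Proof.
move=> ux uy lt_xz lt_zy; apply: Rle_trans (delta_mono (split_level_convex u lt_xz lt_zy)) _.
exact: Rle_trans (delta_maxn _ _) (Rmax_lub _ _ _ ux uy).
Qed.

Definition word_space : COUS :=
  @MkCOUS word word_dist word_lt (fun p q => delta_ge0 _) word_dist_eq0
    (fun p q => f_equal delta (split_levelC p q)) word_dist_tri word_dist_ultra
    word_lt_irrefl word_lt_trans word_lt_total word_dist_convex.

End WordSpace.

(* [cu_lt] is a [Prop], while ranking nodes needs a boolean order. *)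
Definition classicb (Q : Prop) : bool := if excluded_middle_informative Q then true else false.

Lemma classicbP Q : classicb Q <-> Q.
Proof. by rewrite /classicb; case: excluded_middle_informative. Qed.

Section BallTree.
Variables (lev : R -> nat) (n : nat).
Hypotheses (lev_mono : forall a b, (a <= b)%R -> lev a <= lev b) (lev0 : lev 0%R = 0).
Variable X : COUS.
Implicit Types x y z : X.

Definition level x y := lev (cu_d x y).

Lemma level_refl x : level x x = 0.
Proof. by rewrite /level (cu_d_eq0 x x).2. Qed.

Lemma levelC x y : level x y = level y x.
Proof. by rewrite /level cu_d_sym. Qed.

Lemma lev_Rmax a b : lev (Rmax a b) <= maxn (lev a) (lev b).
Proof.
case: (Rle_dec a b) => h; first by rewrite Rmax_right //; lia.
by rewrite Rmax_left; [lia|lra].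
Qed.

Lemma level_ultra x y z : level x z <= maxn (level x y) (level y z).
Proof. exact: leq_trans (lev_mono (cu_d_ultra x y z)) (lev_Rmax _ _). Qed.

Lemma level_convex u x y z r : level u x <= r -> level u y <= r ->
  cu_lt x z -> cu_lt z y -> level u z <= r.
Proof.
move=> ux uy lt_xz lt_zy.
have := cu_convex (Rmax_l (cu_d u x) (cu_d u y)) (Rmax_r (cu_d u x) (cu_d u y)) lt_xz lt_zy.
move=> /lev_mono /leq_trans; apply; apply: leq_trans (lev_Rmax _ _) _.
rewrite -/(level u x) -/(level u y); lia.
Qed.

Lemma level_between x y z : cu_lt x y -> cu_lt y z ->
  level x y <= level x z /\ level y z <= level x z.
Proof.
move=> lt_xy lt_yz; split; first by apply: (level_convex (x := x) (y := z)); rewrite ?level_refl.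
rewrite levelC (levelC x z).
by apply: (level_convex (x := x) (y := z)); rewrite ?level_refl // levelC.
Qed.

Lemma level_gt0_neq x y : 0 < level x y -> x <> y.
Proof. by move=> lvl_gt0 e; rewrite e level_refl in lvl_gt0. Qed.

Lemma lt_far_balls a a1 a' a1' r : level a a1 <= r -> level a' a1' <= r ->
  r < level a a' -> cu_lt a a' -> cu_lt a1 a1'.
Proof.
move=> aa1 aa1' far lt_aa'.
have u1 := level_ultra a a1 a'; have u2 := level_ultra a1 a1' a'.
rewrite (levelC a1' a') in u2.
have ne : a1 <> a1' by move=> e; rewrite -e levelC in aa1'; lia.
case: (cu_lt_total ne) => // lt_a1'a1.
have ne' : a1 <> a' by move=> e; subst; lia.
have refl_le b : level b b <= r by rewrite level_refl.
case: (cu_lt_total ne') => lt3.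
- by have := level_convex aa1' (refl_le a') lt_a1'a1 lt3; rewrite (levelC a' a1); lia.
- by have := level_convex (refl_le a) aa1 lt_aa' lt3; lia.
Qed.

Local Notation node := ({set X} * 'I_n)%type.

Definition node_at x (l : 'I_n) : node := ([set y | level x y <= l], l).

Lemma node_at_eq x y l : node_at x l = node_at y l <-> level x y <= l.
Proof.
split; first by case=> /setP /(_ y); rewrite !inE level_refl => ->.
move=> lxy; congr pair; apply/setP => z; rewrite !inE.
have := level_ultra x y z; have := level_ultra y x z; rewrite (levelC y x).
case: (leqP (level y z) l); case: (leqP (level x z) l) => //; lia.
Qed.

(* The nodes are the balls, listed in depth-first order of the tree of balls:
   a ball comes before the smaller balls it contains, and disjoint balls are
   ordered as their points. *)
Definition precedes x y (l l' : nat) : Prop :=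
  (l' < l /\ level x y <= l) \/ (maxn l l' < level x y /\ cu_lt x y).

Lemma precedes_ball x y x1 y1 l l' : level x x1 <= l -> level y y1 <= l' ->
  precedes x y l l' -> precedes x1 y1 l l'.
Proof.
move=> xx1 yy1 [[lt_l lxy]|[far lt_xy]].
  left; split=> //.
  have := level_ultra x1 x y1; have := level_ultra x y y1; rewrite (levelC x1 x); lia.
right; split.
  have := level_ultra x x1 y; have := level_ultra x1 y1 y; rewrite (levelC y1 y); lia.
by apply: (@lt_far_balls x x1 y y1 (maxn l l')) => //; lia.
Qed.

Lemma precedes_trans x y z l l' l'' :
  precedes x y l l' -> precedes y z l' l'' -> precedes x z l l''.
Proof.
move=> [[a1 a2]|[a1 a2]] [[b1 b2]|[b1 b2]].
- by left; split; [lia|have := level_ultra x y z; lia].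
- case: (leqP (level y z) l) => c.
    by left; split; [lia|have := level_ultra x y z; lia].
  right; split.
    by have := level_ultra x y z; have := level_ultra y x z; rewrite (levelC y x); lia.
  by apply: (@lt_far_balls y x z z l) => //; rewrite ?level_refl // levelC.
- right; split; first by have := level_ultra x z y; rewrite (levelC z y); lia.
  by apply: (@lt_far_balls x x y z l') => //; rewrite ?level_refl //; lia.
- have [m1 m2] := level_between a2 b2.
  by right; split; [lia|exact: cu_lt_trans a2 b2].
Qed.

Definition node_lt (nu mu : node) : bool :=
  classicb (exists x y (l l' : 'I_n), [/\ nu = node_at x l, mu = node_at y l' & precedes x y l l']).

Lemma node_lt_at x y l l' : node_lt (node_at x l) (node_at y l') <-> precedes x y l l'.
Proof.
rewrite /node_lt classicbP; split; last by move=> h; exists x, y, l, l'.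
case=> x1 [y1 [l1 [l1' [e1 e2 h]]]].
have el : l = l1 by case: e1.
have el' : l' = l1' by case: e2.
subst l1 l1'; apply: precedes_ball h; rewrite levelC.
  exact/(node_at_eq x x1 l).
exact/(node_at_eq y y1 l').
Qed.

Lemma node_lt_same_level x y l :
  node_lt (node_at x l) (node_at y l) <-> l < level x y /\ cu_lt x y.
Proof.
rewrite node_lt_at /precedes maxnn ltnn.
by split=> [[[]|]|] //; right.
Qed.

Lemma node_lt_irr : irreflexive node_lt.
Proof.
move=> nu; apply/negP => /classicbP [x [y [l [l' [e1 e2 h]]]]].
have el : l = l' by rewrite e1 in e2; case: e2.
subst l'; rewrite e1 in e2; have := (node_at_eq x y l).1 e2.
by case: h => [[]|[]]; rewrite ?ltnn // maxnn; lia.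
Qed.

Lemma node_lt_trans : transitive node_lt.
Proof.
move=> mu nu rho /classicbP [x [y [l [l' [e1 e2 h1]]]]].
move=> /classicbP [y' [z [l2 [l'' [e3 e4 h2]]]]].
have el : l2 = l' by rewrite e2 in e3; case: e3.
subst l2; rewrite e2 in e3.
have yy' : level y' y <= l' by apply/(node_at_eq y' y l'); rewrite -e3.
have zz : level z z <= l'' by rewrite level_refl.
apply/classicbP; exists x, z, l, l''; split=> //.
exact: precedes_trans h1 (precedes_ball yy' zz h2).
Qed.

Definition nodes : {set node} := [set node_at p.1 p.2 | p : X * 'I_n].

Lemma node_at_in x l : node_at x l \in nodes.
Proof. by apply/imsetP; exists (x, l). Qed.

Lemma nodesP nu : nu \in nodes -> exists x l, nu = node_at x l.
Proof. by case/imsetP => -[x l] _ ->; exists x, l. Qed.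

Lemma node_lt_total : total_on node_lt nodes.
Proof.
move=> nu mu /nodesP [x [l ->]] /nodesP [y [l' ->]] ne.
case: (leqP (level x y) (maxn l l')) => near.
  case: (ltngtP l l') => [lt_l|lt_l'|/val_inj e].
  - by apply/orP; right; apply/node_lt_at; left; split=> //; rewrite levelC; lia.
  - by apply/orP; left; apply/node_lt_at; left; split=> //; lia.
  - by subst l'; rewrite maxnn in near; rewrite (node_at_eq x y l).2 ?eqxx in ne.
case: (cu_lt_total (level_gt0_neq (leq_ltn_trans (leq0n _) near))) => h.
  by apply/orP; left; apply/node_lt_at; right.
by apply/orP; right; apply/node_lt_at; right; rewrite levelC maxnC.
Qed.

End BallTree.

Lemma cu_d_gt0 (X : COUS) (x y : X) : x <> y -> (0 < cu_d x y)%R.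
Proof.
move=> ne; case: (Rle_lt_or_eq_dec _ _ (cu_d_nonneg x y)) => // e.
by case: ne; apply/cu_d_eq0.
Qed.

Section PushNodes.
Variables (lev : R -> nat) (n : nat).
Hypotheses (lev_mono : forall a b, (a <= b)%R -> lev a <= lev b) (lev0 : lev 0%R = 0).
Variables (A B : COUS) (v : A -> B).
Hypotheses (v_dist : forall x y, cu_d (v x) (v y) = cu_d x y)
  (v_lt : forall x y, cu_lt x y <-> cu_lt (v x) (v y)).

(* The default value is never used: every node contains its centre. *)
Definition push_node (nu : {set A} * 'I_n) : {set B} * 'I_n :=
  if [pick a in nu.1] is Some a then node_at lev (v a) nu.2 else (set0, nu.2).

Lemma push_node_at a l : push_node (node_at lev a l) = node_at lev (v a) l.
Proof.
rewrite /push_node; case: pickP => [a1|none] /=; last by have := none a; rewrite inE level_refl.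
rewrite inE => aa1; apply/(node_at_eq lev_mono lev0); rewrite /level v_dist cu_d_sym.
exact: aa1.
Qed.

Lemma push_node_in : {in nodes lev n A, forall nu, push_node nu \in nodes lev n B}.
Proof. by move=> _ /nodesP[a [l ->]]; rewrite push_node_at node_at_in. Qed.

Lemma push_node_lt : {in nodes lev n A &, forall nu mu,
  node_lt lev nu mu -> node_lt lev (push_node nu) (push_node mu)}.
Proof.
move=> _ _ /nodesP[a [l ->]] /nodesP[a' [l' ->]].
rewrite !push_node_at !(node_lt_at lev_mono lev0) /precedes /level !v_dist.
by case=> [|[far /v_lt]]; [left|right].
Qed.

End PushNodes.

Section RmaxSeq.
Variables (T : eqType) (f : T -> R) (m : R).

Definition Rmax_seq (s : seq T) := foldr (fun x acc => Rmax (f x) acc) m s.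

Lemma Rmax_seq_ge_default s : (m <= Rmax_seq s)%R.
Proof. by elim: s => [|y s IH] /=; [apply: Rle_refl|apply: Rle_trans IH (Rmax_r _ _)]. Qed.

Lemma Rmax_seq_ge s x : x \in s -> (f x <= Rmax_seq s)%R.
Proof.
elim: s => [//|y s IH]; rewrite inE => /orP[/eqP->|xs] /=; first exact: Rmax_l.
exact: Rle_trans (IH xs) (Rmax_r _ _).
Qed.

Lemma Rmax_seq_le s b : (m <= b)%R -> (forall x, x \in s -> (f x <= b)%R) ->
  (Rmax_seq s <= b)%R.
Proof.
move=> mb; elim: s => [//|y s IH] le_b /=.
apply: Rmax_lub; first by apply: le_b; rewrite mem_head.
by apply: IH => x xs; apply: le_b; rewrite inE xs orbT.
Qed.

Lemma Rmax_seq_mem s : Rmax_seq s = m \/ exists2 x, x \in s & Rmax_seq s = f x.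
Proof.
elim: s => [|y s IH] /=; first by left.
case: (Rle_dec (f y) (Rmax_seq s)) => h.
  rewrite Rmax_right //; case: IH => [->|[x xs ->]]; first by left.
  by right; exists x => //; rewrite inE xs orbT.
by rewrite Rmax_left; [right; exists y; rewrite ?mem_head|lra].
Qed.

End RmaxSeq.

Section DistanceLevels.
Variable B : COUS.
Implicit Types p : B * B.

Definition pair_dist p := cu_d p.1 p.2.

(* Counting pairs rather than distinct distances avoids deciding equality of reals. *)
Definition dist_level (t : R) :=
  #|[set p | classicb (0 < pair_dist p)%R && classicb (pair_dist p <= t)%R]|.

Definition num_levels := #|[set p | classicb (0 < pair_dist p)%R]|.

Lemma dist_level_mono a b : (a <= b)%R -> dist_level a <= dist_level b.
Proof.
move=> le_ab; apply: subset_leq_card; apply/subsetP => p; rewrite !inE.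
by case/andP=> -> /classicbP le_pa; apply/classicbP; lra.
Qed.

Lemma dist_level0 : dist_level 0 = 0.
Proof.
apply/eqP; rewrite cards_eq0; apply/eqP/setP => p; rewrite !inE.
by apply/negP => /andP[/classicbP ? /classicbP ?]; lra.
Qed.

Lemma dist_level_le t : dist_level t <= num_levels.
Proof. by apply: subset_leq_card; apply/subsetP => p; rewrite !inE => /andP[]. Qed.

Lemma dist_level_lt p t : (0 < pair_dist p)%R -> (t < pair_dist p)%R ->
  dist_level t < dist_level (pair_dist p).
Proof.
move=> p_pos lt_tp; apply: proper_card; apply/properP; split.
  by apply/subsetP => q; rewrite !inE => /andP[-> /classicbP ?]; apply/classicbP; lra.
exists p; rewrite !inE; first by apply/andP; split; apply/classicbP; [|apply: Rle_refl].
by apply/negP => /andP[_ /classicbP ?]; lra.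
Qed.

Lemma dist_level_gt0 p : (0 < pair_dist p)%R -> 0 < dist_level (pair_dist p).
Proof. by move=> p_pos; have := dist_level_lt p_pos p_pos; rewrite dist_level0. Qed.

Definition least_pos_dist (m0 : R) := 0 < num_levels ->
  (exists p, m0 = pair_dist p) /\ forall p, (0 < pair_dist p)%R -> (m0 <= pair_dist p)%R.

Lemma exists_least_pos_dist : exists2 m0, (0 < m0)%R & least_pos_dist m0.
Proof.
case: (posnP num_levels) => [nl0|nl_gt0]; first by exists 1%R; [lra|rewrite /least_pos_dist nl0].
have [p0 p0_pos] : exists p0, classicb (0 < pair_dist p0)%R.
  by move: nl_gt0; rewrite lt0n cards_eq0 => /set0Pn[p0]; rewrite inE; exists p0.
have [pm /classicbP pm_pos pm_min] :=
  @arg_minnP _ p0 (fun p => classicb (0 < pair_dist p)%R) (fun p => dist_level (pair_dist p)) p0_pos.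
exists (pair_dist pm) => // _; split=> [|p p_pos]; first by exists pm.
case: (Rle_dec (pair_dist pm) (pair_dist p)) => // /Rnot_le_lt lt_pm.
have := dist_level_lt pm_pos lt_pm; have := pm_min p (proj2 (classicbP _) p_pos); lia.
Qed.

Variable m0 : R.
Hypotheses (m0_pos : (0 < m0)%R) (m0_least : least_pos_dist m0).

(* The largest distance of level at most [j]; the floor [m0] keeps it positive
   on the levels below the least positive distance. *)
Definition level_dist (j : nat) : R :=
  if j is 0 then 0%R
  else Rmax_seq pair_dist m0 [seq p <- enum {: B * B} | dist_level (pair_dist p) <= j].

Lemma level_dist0 : level_dist 0 = 0%R.
Proof. by []. Qed.

Lemma level_dist_gt0 j : 0 < j -> (0 < level_dist j)%R.
Proof. by case: j => // j _; exact: Rlt_le_trans m0_pos (Rmax_seq_ge_default _ _ _). Qed.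

Lemma level_dist_mono i j : i <= j -> (level_dist i <= level_dist j)%R.
Proof.
case: i => [|i] le_ij.
  by case: j le_ij => [|j] _; [apply: Rle_refl|apply/Rlt_le/level_dist_gt0].
case: j le_ij => [//|j] le_ij /=.
apply: Rmax_seq_le; first exact: Rmax_seq_ge_default.
move=> p; rewrite mem_filter => /andP[p_le p_in]; apply: Rmax_seq_ge.
by rewrite mem_filter p_in andbT; apply: leq_trans p_le le_ij.
Qed.

Lemma dist_levelK p : level_dist (dist_level (pair_dist p)) = pair_dist p.
Proof.
case: (Rle_lt_or_eq_dec _ _ (cu_d_nonneg p.1 p.2)) => [p_pos|p0]; last first.
  by rewrite /pair_dist -p0 dist_level0.
have := dist_level_gt0 p_pos; case lvl_p: (dist_level _) => [//|j] _ /=.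
have [_ m0_le] := m0_least (leq_trans (dist_level_gt0 p_pos) (dist_level_le _)).
apply: Rle_antisym.
  apply: Rmax_seq_le => [|q]; first exact: m0_le.
  rewrite mem_filter => /andP[q_le _].
  case: (Rle_dec (pair_dist q) (pair_dist p)) => // /Rnot_le_lt lt_pq.
  have q_pos : (0 < pair_dist q)%R by have := cu_d_nonneg p.1 p.2; rewrite -/(pair_dist p); lra.
  by have := dist_level_lt q_pos lt_pq; rewrite lvl_p; lia.
by apply: Rmax_seq_ge; rewrite mem_filter lvl_p leqnn mem_enum.
Qed.

Lemma level_dist_mem j : 0 < j <= num_levels -> exists p, level_dist j = pair_dist p.
Proof.
case: j => [//|j] j_le.
have [[p0 m0E] _] := m0_least (leq_trans (ltn0Sn j) j_le).
rewrite /level_dist; set s := filter _ _.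
by case: (Rmax_seq_mem pair_dist m0 s) => [->|[p _ ->]]; [exists p0|exists p].
Qed.

End DistanceLevels.

Section LevelTree.
Variables (B : COUS) (m0 : R).
Hypothesis m0_pos : (0 < m0)%R.
Variable N : nat.

Local Notation lev := (dist_level B).
Local Notation n := (num_levels B).

Definition level_tree : COUS :=
  word_space n N.+1 (level_dist0 B m0) (level_dist_mono B m0_pos) (level_dist_gt0 B m0_pos).

Lemma spec_in_level_tree (S : R -> Prop) (b0 : B) :
  least_pos_dist B m0 ->
  spec_in S B -> spec_in S level_tree.
Proof.
move=> m0_least specB p q; rewrite [cu_d _ _]/=/word_dist.
have := split_level_le p q; case: (posnP (split_level p q)) => [->|lvl_gt0 lvl_le].
  by have := specB b0 b0; rewrite (cu_d_eq0 b0 b0).2.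
have lvl : 0 < split_level p q <= n by rewrite lvl_gt0.
have [pr ->] := level_dist_mem m0_least lvl.
exact: specB.
Qed.

Definition node_word (X : COUS) (Z : {set X} * 'I_n -> nat) (x : X) : word n N.+1 :=
  [ffun l => inord (Z (node_at lev x l))].

End LevelTree.

Section TreeEmbedding.
Variables (B : COUS) (m0 : R).
Hypotheses (m0_pos : (0 < m0)%R) (m0_least : least_pos_dist B m0).
Variables (N : nat) (phi : nat -> nat).

Local Notation lev := (dist_level B).
Local Notation n := (num_levels B).
Local Notation rk := (rank (@node_lt lev n B) (nodes lev n B)).
Let lev_mono := @dist_level_mono B.
Let lev0 := dist_level0 B.
Let irr := node_lt_irr lev_mono lev0 (n := n) (X := B).
Let trn := node_lt_trans lev_mono lev0 (n := n) (X := B).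
Let tot := node_lt_total lev_mono lev0 (n := n) (X := B).

Hypothesis phi_incr : incr_below phi #|nodes lev n B| N.

Definition tree_word (b : B) := node_word N (phi \o rk) b.

Lemma rank_node_at_bound (b : B) l : rk (node_at lev b l) < #|nodes lev n B|.
Proof. exact: (rank_bound irr (node_at_in lev b l)). Qed.

Lemma tree_word_val b l : nat_of_ord (tree_word b l) = phi (rk (node_at lev b l)).
Proof. by rewrite ffunE inordK // ltnS ltnW // phi_incr.2 // rank_node_at_bound. Qed.

Lemma tree_word_eq b b' l : tree_word b l = tree_word b' l <-> level lev b b' <= l.
Proof.
rewrite -(node_at_eq lev_mono lev0); split=> [e|e]; last first.
  by apply: val_inj; rewrite /= !tree_word_val e.
apply: (rank_inj irr trn tot); try exact: node_at_in.
by apply: (incr_below_inj phi_incr); rewrite ?rank_node_at_bound // -!tree_word_val e.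
Qed.

Lemma tree_word_lt b b' l :
  tree_word b l < tree_word b' l <-> l < level lev b b' /\ cu_lt b b'.
Proof.
rewrite !tree_word_val (incr_below_ltE phi_incr) ?rank_node_at_bound //.
rewrite (rank_ltE irr trn tot) ?node_at_in //; exact: node_lt_same_level.
Qed.

Lemma split_level_tree_word b b' : split_level (tree_word b) (tree_word b') = level lev b b'.
Proof. exact: split_level_eq (dist_level_le _ _) (tree_word_eq b b'). Qed.

Definition tree_emb : {ffun B -> level_tree B m0_pos N} := [ffun b => tree_word b].

Lemma tree_emb_dist x y : cu_d (tree_emb x) (tree_emb y) = cu_d x y.
Proof.
rewrite !ffunE /= /word_dist split_level_tree_word.
exact: (dist_levelK m0_least (x, y)).
Qed.

Lemma tree_emb_is_emb : is_emb tree_emb.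
Proof.
split; [|split].
- by move=> x y e; apply/(cu_d_eq0 x y); rewrite -tree_emb_dist e (cu_d_eq0 _ _).2.
- exact: tree_emb_dist.
- move=> x y; rewrite !ffunE; symmetry.
  apply: (word_ltE (L := level lev x y)); first exact: dist_level_le;
    [|exact: tree_word_eq|exact: tree_word_lt].
  move=> lt_xy; apply: (dist_level_gt0 (p := (x, y))); apply: cu_d_gt0 => /= e.
  by rewrite /= e in lt_xy; exact: cu_lt_irrefl lt_xy.
Qed.

Variables (A : COUS) (k : nat) (chi : {ffun A -> level_tree B m0_pos N} -> 'I_k).

Definition node_colouring (Z : {set A} * 'I_n -> nat) : nat := chi [ffun a => node_word N Z a].

Lemma node_colouring_depends : depends_on (nodes lev n A) node_colouring.
Proof.
move=> Z Z' eqZ; congr (nat_of_ord (chi _)); apply/ffunP => a; rewrite !ffunE.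
by apply/ffunP => l; rewrite !ffunE eqZ // node_at_in.
Qed.

Lemma tree_emb_homogeneous c :
  (forall Z, mono_on (@node_lt lev n A) (nodes lev n A) Z #|nodes lev n B| ->
    node_colouring (phi \o Z) = c) ->
  forall v, is_emb v -> chi [ffun x => tree_emb (v x)] = c :> nat.
Proof.
move=> hom v [_ [v_dist v_lt]].
have -> : [ffun x => tree_emb (v x)] = [ffun a => node_word N (phi \o (rk \o push_node lev v)) a].
  apply/ffunP => a; rewrite !ffunE; apply/ffunP => l.
  by rewrite !ffunE /= (push_node_at lev_mono lev0 v_dist).
rewrite -(hom (rk \o push_node lev v)) //; split=> [nu mu nuA muA lt_nm|nu nuA] /=.
  apply: (rank_lt irr trn); first exact: (push_node_in lev_mono lev0 v_dist).
  exact: (push_node_lt lev_mono lev0 v_dist v_lt).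
exact: (rank_bound irr (push_node_in lev_mono lev0 v_dist nuA)).
Qed.

End TreeEmbedding.

Lemma ramsey_empty_target (P : COUS -> Prop) k (A B : COUS) :
  P B -> #|B| = 0 -> (exists f : {ffun A -> B}, is_emb f) ->
  exists C : COUS, P C /\ forall chi : {ffun A -> C} -> 'I_k,
    exists (i : 'I_k) (w : {ffun B -> C}),
      is_emb w /\ forall u : {ffun A -> B}, is_emb u -> chi [ffun x => w (u x)] = i.
Proof.
move=> PB B0 [f0 _]; exists B; split=> // chi.
have id_emb : is_emb [ffun b : B => b].
  by split; [move=> x y; rewrite !ffunE|split=> x y; rewrite !ffunE].
exists (chi [ffun x => f0 x]), [ffun b => b]; split=> // u _; congr chi.
by apply/ffunP => x; move/card0_eq: B0 => /(_ (f0 x)).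
Qed.

Theorem ramsey_spec_in (S : R -> Prop) : ramsey_property (spec_in S).
Proof.
move=> k _ A B _ specB emb_AB.
case: (posnP #|B|) => [B0|/card_gt0P[b0 _]]; first exact: ramsey_empty_target.
have [m0 m0_pos m0_least] := exists_least_pos_dist B.
have lev_mono := @dist_level_mono B; have lev0 := dist_level0 B.
have [N ramseyN] := chain_ramsey (node_lt_irr lev_mono lev0 (n := num_levels B) (X := A))
  (node_lt_trans lev_mono lev0 (n := num_levels B) (X := A))
  (node_lt_total lev_mono lev0 (n := num_levels B) (X := A))
  #|nodes (dist_level B) (num_levels B) B| k.
exists (level_tree B m0_pos N); split; first exact: spec_in_level_tree b0 m0_least specB.
move=> chi; have [f0 f0_emb] := emb_AB.
have [phi phi_incr [c hom]] := ramseyN _ (node_colouring_depends chi) (fun Z => ltn_ord _).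
exists (chi [ffun x => tree_emb B m0_pos N phi (f0 x)]), (tree_emb B m0_pos N phi).
split; first exact: tree_emb_is_emb.
by move=> u u_emb; apply: val_inj; rewrite /= !(tree_emb_homogeneous hom).
Qed.

Theorem theorem4p2 :
  (forall S : R -> Prop, (forall r, S r -> (0 <= r)%R) ->
     ramsey_property (spec_in S)) /\
  ramsey_property (fun _ : COUS => True).
Proof.
split=> [S _|k k_ge2 A B _ _ emb_AB]; first exact: ramsey_spec_in.
have [C [_ ramseyC]] := ramsey_spec_in (S := fun r => (0 <= r)%R) k_ge2
  (fun x y => cu_d_nonneg x y) (fun x y => cu_d_nonneg x y) emb_AB.
by exists C.
Qed.
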